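(* Let $\mathfrak H$ be a P-module. There exist $n\geq 1$, irreducible sub-modules $\mathfrak H_i\subset\mathfrak H$ for $1\leq i\leq n$, and a vector subspace $\mathfrak H_{\mathrm{res}}\subset\mathfrak H$ containing no non-zero sub-module, such that $\mathfrak H=\left(\bigoplus_{i=1}^n\mathfrak H_i\right)\oplus\mathfrak H_{\mathrm{res}}$ (orthogonal direct sum).
   Context: A Pythagorean module (P-module) is a triple $(A,B,\mathfrak H)$ where $\mathfrak H$ is a finite-dimensional complex Hilbert space and $A,B$ are linear operators on $\mathfrak H$ with $A^*A+B^*B=\mathrm{id}_{\mathfrak H}$. A sub-module is a subspace $\mathfrak K\subset\mathfrak H$ with $A\mathfrak K\subset\mathfrak K$ and $B\mathfrak K\subset\mathfrak K$ (no invariance under $A^*,B^*$ is required), equipped with the restrictions of $A,B$. A P-module is irreducible if it has no sub-module other than $\{0\}$ and itself. *)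

(* A finite-dimensional complex Hilbert space of dimension d
   is modelled as the row vectors 'rV[C]_d with the standard inner product
   <u, v> = u *m (adjmx v), over an arbitrary numClosedFieldType C (which
   includes the complex numbers).  A linear operator is a matrix A acting on
   row vectors from the right: u |-> u *m A.  Its Hilbert adjoint is then
   u |-> u *m adjmx A.  Subspaces are row spaces of d x d matrices (mxalgebra). *)
From HB Require Import structures.
From mathcomp Require Import all_boot all_order all_algebra.
Set Implicit Arguments. Unset Strict Implicit. Unset Printing Implicit Defensive.
Import Order.TTheory GRing.Theory Num.Theory.
Local Open Scope ring_scope.

Definition adjmx (C : numClosedFieldType) (m n : nat) (A : 'M[C]_(m, n)) : 'M[C]_(n, m) :=
  map_mx Num.conj (A^T).

(* (A, B, C^d) is a P-module: A^*A + B^*B = id.  With operators acting on the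
   right of row vectors, the composite A^* o A is the matrix A *m adjmx A. *)
Definition Pmodule (C : numClosedFieldType) (d : nat) (A B : 'M[C]_d) : Prop :=
  A *m adjmx A + B *m adjmx B = 1%:M.

Definition submodule (C : numClosedFieldType) (d : nat) (A B K : 'M[C]_d) : Prop :=
  (K *m A <= K)%MS /\ (K *m B <= K)%MS.

Definition irreducible_submodule (C : numClosedFieldType) (d : nat) (A B K : 'M[C]_d) : Prop :=
  submodule A B K /\
  forall L : 'M[C]_d, (L <= K)%MS -> submodule A B L -> (L == (0 : 'M[C]_d))%MS \/ (L == K)%MS.

Definition no_nonzero_submodule (C : numClosedFieldType) (d : nat) (A B U : 'M[C]_d) : Prop :=
  forall L : 'M[C]_d, (L <= U)%MS -> submodule A B L -> (L == (0 : 'M[C]_d))%MS.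

Definition mx_orthogonal (C : numClosedFieldType) (d : nat) (U V : 'M[C]_d) : Prop :=
  U *m adjmx V = 0.

(** Peel off irreducible sub-modules one at a time.  If
    a subspace U contains a non-zero sub-module, then by descent on the
    dimension it contains a non-zero irreducible one, L; since L <= U, U is the
    orthogonal sum of L and U :&: L^!, which has smaller dimension, so one
    recurses on it.  The recursion stops at a subspace with no non-zero
    sub-module, which is H_res.  Started from U = H this yields the theorem. *)
From HB Require Import structures.
From mathcomp Require Import all_boot all_order all_algebra.
From Stdlib Require Import Classical.
Set Implicit Arguments.
Unset Strict Implicit.
Unset Printing Implicit Defensive.
Import Order.TTheory GRing.Theory Num.Theory.
Local Open Scope ring_scope.

(* The orthogonal complement for the standard inner product, written with the
   same term as the local notation of spectral.v so that its lemmas apply. *)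
Local Notation "B ^!" :=
  (orthomx Num.conj (mx_of_hermitian (hermitian1mx _)) B) : matrix_set_scope.

Lemma pairwise_sym_nth (T : Type) (r : rel T) (x0 : T) (s : seq T) :
  symmetric r -> pairwise r s ->
  {in gtn (size s) &, forall i j, i != j -> r (nth x0 s i) (nth x0 s j)}.
Proof.
move=> r_sym /pairwiseP r_s i j lti ltj; case: ltngtP => // [ltij | ltji] _.
  exact: r_s.
by rewrite r_sym; apply: r_s.
Qed.

Section OrthogonalComplement.
Variable C : numClosedFieldType.

Lemma mx_orthogonalP (d : nat) (U V : 'M[C]_d) :
  reflect (mx_orthogonal U V) (U <= V^!)%MS.
Proof. exact: orthomx1P. Qed.

Lemma orthomx_symmetric (n : nat) : symmetric (fun X Y : 'M[C]_n => X <= Y^!)%MS.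
Proof. by move=> X Y; apply: orthomx_sym. Qed.

Lemma submx_ortho_eq0 (m p n : nat) (X : 'M[C]_(m, n)) (L : 'M[C]_(p, n)) :
  (X <= L)%MS -> (X <= L^!)%MS -> X = 0.
Proof.
move=> XL XLo; apply/eqP.
by rewrite -submx0 -(orthomx_ortho_disj L) sub_capmx XL.
Qed.

Lemma addsmx_cap_ortho (m p n : nat) (L : 'M[C]_(m, n)) (U : 'M[C]_(p, n)) :
  (L <= U)%MS -> (L + (U :&: L^!) :=: U)%MS.
Proof.
move=> LU; rewrite capmxC; apply: eqmx_trans (matrix_modl _ LU) _.
apply: eqmx_trans (cap_eqmx (addsmx_ortho L) (eqmx_refl U)) _.
by apply: capTmx; rewrite -sub1mx.
Qed.

Lemma submx_sumsmx_seq (n : nat) (X : 'M[C]_n) (s : seq 'M[C]_n) :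
  X \in s -> (X <= \sum_(Y <- s) Y)%MS.
Proof. by move=> Xs; rewrite (big_rem X) //= addsmxSl. Qed.

End OrthogonalComplement.

Section Submodules.
Variables (C : numClosedFieldType) (d : nat) (A B : 'M[C]_d).

Lemma irreducible_submodule0 : irreducible_submodule A B 0.
Proof.
split; first by split; rewrite mul0mx sub0mx.
by move=> L; rewrite submx0 => L0 _; left; rewrite L0 sub0mx.
Qed.

Lemma exists_nonzero_submodule (U : 'M[C]_d) :
  ~ no_nonzero_submodule A B U ->
  exists L, [/\ (L <= U)%MS, submodule A B L & L != 0].
Proof.
move=> hasU; apply: NNPP => noL; apply: hasU => L LU subL.
by apply/eqmx0P/eqP; apply: contra_notT noL => nzL; exists L.
Qed.

Lemma exists_proper_submodule (L0 : 'M[C]_d) :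
  submodule A B L0 -> ~ irreducible_submodule A B L0 ->
  exists L, [/\ (L < L0)%MS, submodule A B L & L != 0].
Proof.
move=> subL0 redL0; apply: NNPP => noL; apply: redL0; split=> // L LL0 subL.
have [-> | nzL] := eqVneq L 0; first by left; rewrite sub0mx.
right; apply: contra_notT noL => neL; exists L.
by split=> //; rewrite ltmxEneq neL LL0.
Qed.

Lemma exists_irreducible_submodule (U : 'M[C]_d) :
  ~ no_nonzero_submodule A B U ->
  exists L, [/\ irreducible_submodule A B L, (L <= U)%MS & L != 0].
Proof.
move=> /exists_nonzero_submodule[L0 [L0U subL0 nzL0]].
have [k] := ubnP (\rank L0).
elim: k L0 L0U subL0 nzL0 => // k IHk L0 L0U subL0 nzL0 rankL0.
have [irrL0 | /(exists_proper_submodule subL0)[L [ltL subL nzL]]] :=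
  classic (irreducible_submodule A B L0); first by exists L0.
have LU : (L <= U)%MS := submx_trans (ltmxW ltL) L0U.
have [L1 [irrL1 L1L nzL1]] :=
  IHk L LU subL nzL (leq_trans (rank_ltmx ltL) rankL0).
by exists L1; split=> //; apply: submx_trans L1L LU.
Qed.

Lemma orthogonal_decomposition (U : 'M[C]_d) :
  exists (s : seq 'M[C]_d) (R : 'M[C]_d),
    [/\ {in s, forall X, irreducible_submodule A B X},
        no_nonzero_submodule A B R,
        pairwise (fun X Y => X <= Y^!)%MS s,
        all (fun X => X <= R^!)%MS s
      & (\sum_(X <- s) X + R :=: U)%MS].
Proof.
have [k] := ubnP (\rank U); elim: k U => // k IHk U rankU.
have [noU | /exists_irreducible_submodule[L [irrL LU nzL]]] :=
  classic (no_nonzero_submodule A B U).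
  by exists [::], U; split=> //; rewrite big_nil; apply: adds0mx.
set U' := (U :&: L^!)%MS.
have U'_ortho (X : 'M[C]_d) : (X <= U')%MS -> (X <= L^!)%MS.
  by move=> XU'; apply: submx_trans XU' (capmxSr _ _).
have ltU' : (U' < U)%MS.
  rewrite ltmxE capmxSl; apply: contra nzL => UU'; apply/eqP.
  exact: submx_ortho_eq0 (submx_refl L) (U'_ortho L (submx_trans LU UU')).
have [s [R [irrs noR orths orthR sumU']]] :=
  IHk U' (leq_trans (rank_ltmx ltU') rankU).
exists (L :: s), R; split=> //.
- by move=> X /predU1P[-> | /irrs].
- rewrite pairwise_cons orths andbT; apply/allP => X Xs.
  rewrite orthomx_symmetric U'_ortho // -sumU'.
  exact: submx_trans (submx_sumsmx_seq Xs) (addsmxSl _ _).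
- by rewrite /= orthR andbT orthomx_symmetric U'_ortho // -sumU' addsmxSr.
- rewrite big_cons -addsmxA.
  exact: eqmx_trans (adds_eqmx (eqmx_refl L) sumU') (addsmx_cap_ortho LU).
Qed.

(* The zero module is irreducible by definition, so it may stand in for an
   empty list of summands; for U = 1%:M that list is empty only when d = 0. *)
Lemma nonempty_orthogonal_decomposition (U : 'M[C]_d) :
  exists (s : seq 'M[C]_d) (R : 'M[C]_d),
    [/\ s != [::], {in s, forall X, irreducible_submodule A B X},
        no_nonzero_submodule A B R,
        pairwise (fun X Y => X <= Y^!)%MS s /\ all (fun X => X <= R^!)%MS s
      & (\sum_(X <- s) X + R :=: U)%MS].
Proof.
have [[|X s] [R [irrs noR orths orthR sumU]]] := orthogonal_decomposition U.
  exists [:: 0], R; split=> //=; rewrite ?sub0mx //.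
    by move=> X /predU1P[-> | //]; apply: irreducible_submodule0.
  by apply: eqmx_trans sumU; rewrite big_seq1 big_nil.
by exists (X :: s), R.
Qed.

End Submodules.

Theorem lemma2p1 (C : numClosedFieldType) (d : nat) (A B : 'M[C]_d) :
  Pmodule A B ->
  exists (n : nat) (Hs : 'I_n -> 'M[C]_d) (Hres : 'M[C]_d),
    [/\ (0 < n)%N,
        forall i, irreducible_submodule A B (Hs i),
        no_nonzero_submodule A B Hres,
        (forall i j, i != j -> mx_orthogonal (Hs i) (Hs j))
          /\ (forall i, mx_orthogonal (Hs i) Hres)
      & ((\sum_i Hs i + Hres)%MS == 1%:M)%MS].
Proof.
move=> _.
have [s [R [s_ne irrs noR [orths orthR] sumR]]] :=
  nonempty_orthogonal_decomposition A B 1%:M.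
exists (size s), (nth 0 s), R; split=> //.
- by rewrite lt0n size_eq0.
- by move=> i; apply/irrs/mem_nth.
- split=> [i j neq_ij | i]; apply/mx_orthogonalP; last exact/(allP orthR)/mem_nth.
  exact: (pairwise_sym_nth 0 (@orthomx_symmetric C d) orths
                            (ltn_ord i) (ltn_ord j)).
- by apply/eqmxP; apply: eqmx_trans sumR; rewrite (big_nth 0) big_mkord.
Qed.
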